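(* Let $(V^n,g)$ be a Euclidean vector space, $\mathfrak{g}\subseteq\mathfrak{so}(V)$ a Lie subalgebra and $T\in\Lambda^3V\cap(\Lambda^1V\otimes\mathfrak{g})$. Define $R^T(X,Y)=[T_X,T_Y]+2T_{T_XY}$ and $\Omega^T=\frac12\sum_{i}T_{e_i}\wedge T_{e_i}\in\Lambda^4V$. Then: (i) $R^T\in\mathcal{K}(\mathfrak{g},V)$; (ii) $\Omega^T\in\Lambda^4V\cap(\Lambda^2V\otimes\mathfrak{g})$; (iii) $R^T=0$ if and only if $T=0$; (iv) if moreover $(\mathfrak{g},V)$ is irreducible and $\dim\mathcal{K}(\mathfrak{g},V)=1$, then $\langle X\lrcorner T,Y\lrcorner T\rangle=\frac3n|T|^2\langle X,Y\rangle$ for all $X,Y\in V$.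
   Context: $\Lambda^2V$ is identified with $\mathfrak{so}(V)$ via $F\mapsto g(F\cdot,\cdot)$, with the standard inner product on forms ($e_{i_1}\wedge\dots\wedge e_{i_p}$, $i_1<\dots<i_p$, orthonormal). For $T\in\Lambda^3V$, $T_X\in\mathfrak{so}(V)$ is defined by $g(T_X\cdot,\cdot)=X\lrcorner T$; $\{e_i\}$ is an orthonormal basis. $\Lambda^3V\cap(\Lambda^1V\otimes\mathfrak{g})=\{T\in\Lambda^3V:X\lrcorner T\in\mathfrak{g}\ \forall X\}$ and $\Lambda^4V\cap(\Lambda^2V\otimes\mathfrak{g})=\{\beta\in\Lambda^4V:X\lrcorner Y\lrcorner\beta\in\mathfrak{g}\ \forall X,Y\}$. $\mathcal{K}(\mathfrak{g},V)$ is the space of $R\in\Lambda^2V\otimes\Lambda^2V$ with $R(X,Y)\in\mathfrak{g}$ for all $X,Y$ satisfying the first Bianchi identity $\sum_ie_i\wedge R(e_i,X)=0$ for all $X$. *)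

(* V = R^n realised as row vectors 'rV[R]_n with the standard
   (Euclidean) inner product; R : rcfType (a real closed field, e.g. the reals). *)
From HB Require Import structures.
From mathcomp Require Import all_boot all_order all_algebra.
Set Implicit Arguments. Unset Strict Implicit. Unset Printing Implicit Defensive.
Import Order.TTheory GRing.Theory Num.Theory.
Local Open Scope ring_scope.

Section Defs.
Variables (R : rcfType) (n : nat).

Definition ebas (i : 'I_n) : 'rV[R]_n := delta_mx 0 i.

Definition vdot (X Y : 'rV[R]_n) : R := (X *m Y^T) 0 0.

(* Convention: a matrix F : 'M_n is the endomorphism  v |-> v *m F  of V.
   Then g(F e_j, e_k) = F j k, so the identification so(V) = Lambda^2 V,
   F |-> g(F.,.), sends F to the 2-form with components F j k. *)
Definition act (F : 'M[R]_n) (v : 'rV[R]_n) : 'rV[R]_n := v *m F.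

(* Lie bracket of endomorphisms: [A,B] = A o B - B o A (matrix of A o B is B *m A). *)
Definition lie (A B : 'M[R]_n) : 'M[R]_n := B *m A - A *m B.

Definition so_subalg (G : 'A[R]_n) : Prop :=
  (forall F : 'M[R]_n, (F \in G)%MS -> F^T = - F) /\
  (forall F1 F2 : 'M[R]_n, (F1 \in G)%MS -> (F2 \in G)%MS -> (lie F1 F2 \in G)%MS).

(* 3-forms and 4-forms, by their components w.r.t. the orthonormal basis *)
Definition form3 := 'I_n -> 'I_n -> 'I_n -> R.
Definition form4 := 'I_n -> 'I_n -> 'I_n -> 'I_n -> R.

Definition alt3 (T : form3) : Prop :=
  forall i j k, T i j k = - T j i k /\ T i j k = - T i k j.

Definition alt4 (B : form4) : Prop :=
  forall a b c d, [/\ B a b c d = - B b a c d, B a b c d = - B a c b d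
                    & B a b c d = - B a b d c].

(* T_X : g(T_X Y, Z) = (X _| T)(Y,Z) = T(X,Y,Z) *)
Definition Tx (T : form3) (X : 'rV[R]_n) : 'M[R]_n :=
  \matrix_(j, k) \sum_i X 0 i * T i j k.

Definition RTf (T : form3) (X Y : 'rV[R]_n) : 'M[R]_n :=
  lie (Tx T X) (Tx T Y) + 2 *: Tx T (act (Tx T X) Y).

(* An element of Lambda^2 V (x) Lambda^2 V given by its values on basis pairs,
   extended bilinearly *)
Definition Rapp (Rc : 'I_n -> 'I_n -> 'M[R]_n) (X Y : 'rV[R]_n) : 'M[R]_n :=
  \sum_i \sum_j (X 0 i * Y 0 j) *: Rc i j.

Definition RTc (T : form3) (i j : 'I_n) : 'M[R]_n := RTf T (ebas i) (ebas j).

(* wedge products (determinant convention: e_{i1} ^ ... ^ e_{ip} orthonormal) *)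
Definition wedge12 (a : 'rV[R]_n) (w : 'M[R]_n) : form3 :=
  fun x y z => a 0 x * w y z + a 0 y * w z x + a 0 z * w x y.

Definition wedge22 (u w : 'M[R]_n) : form4 :=
  fun a b c d =>
    u a b * w c d - u a c * w b d + u a d * w b c
  + u b c * w a d - u b d * w a c + u c d * w a b.

Definition OmegaT (T : form3) : form4 :=
  fun a b c d => 2^-1 * \sum_i wedge22 (Tx T (ebas i)) (Tx T (ebas i)) a b c d.

(* X _| Y _| beta, as an element of so(V) = Lambda^2 V *)
Definition contr2 (B : form4) (X Y : 'rV[R]_n) : 'M[R]_n :=
  \matrix_(c, d) \sum_a \sum_b Y 0 a * X 0 b * B a b c d.

(* K(g,V): R in Lambda^2 V (x) Lambda^2 V, R(X,Y) in g, first Bianchi identity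
   sum_i e_i ^ R(e_i,X) = 0 *)
Definition Kmem (G : 'A[R]_n) (Rc : 'I_n -> 'I_n -> 'M[R]_n) : Prop :=
  [/\ (forall i j, Rc i j = - Rc j i),
      (forall i j, (Rc i j)^T = - Rc i j),
      (forall X Y, (Rapp Rc X Y \in G)%MS)
    & (forall X a b c, \sum_i wedge12 (ebas i) (Rapp Rc (ebas i) X) a b c = 0)].

Definition dimK1 (G : 'A[R]_n) : Prop :=
  exists R0, [/\ Kmem G R0, (exists i j, R0 i j != 0)
               & forall Rc, Kmem G Rc -> exists c : R, forall i j, Rc i j = c *: R0 i j].

Definition irreducible (G : 'A[R]_n) : Prop :=
  (0 < n)%N /\
  forall U : 'M[R]_n, (forall F, (F \in G)%MS -> (U *m F <= U)%MS) ->
    (U == (0 : 'M[R]_n))%MS || (U == (1%:M : 'M[R]_n))%MS.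

(* inner products on forms: e_{i1}^...^e_{ip}, i1<...<ip, orthonormal *)
Definition form2_dot (u w : 'M[R]_n) : R :=
  \sum_(a : 'I_n) \sum_(b : 'I_n | (a < b)%N) u a b * w a b.

Definition form3_norm2 (T : form3) : R :=
  \sum_(a : 'I_n) \sum_(b : 'I_n | (a < b)%N) \sum_(c : 'I_n | (b < c)%N) T a b c ^+ 2.

End Defs.

From HB Require Import structures.
From mathcomp Require Import all_boot all_order all_algebra.
From mathcomp Require Import ring complex.
Set Implicit Arguments. Unset Strict Implicit. Unset Printing Implicit Defensive.
Import Order.TTheory GRing.Theory Num.Theory.
Local Open Scope ring_scope.

(* Everything is computed in the orthonormal basis e_i, where T_X, R^T(e_i,e_j)
   and the contractions of Omega^T have explicit components.
   (i)   R^T is bilinear, so it is the tensor with components R^T(e_i,e_j); its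
         values are combinations of T_X's and of their brackets, hence lie in g;
         antisymmetry, skewness and the Bianchi identity are polynomial identities
         in the T_ijk.
   (ii)  Omega^T is alternating, and X _| Y _| Omega^T = [T_X,T_Y] - T_{T_X Y} lies in g.
   (iii) R^T(e_i,e_j) e_j . e_i = -3 sum_k T_ijk^2, so R^T = 0 forces T = 0.
   (iv)  g acts on K(g,V) by derivations and the Ricci contraction intertwines this
         action with the commutator.  When dim K(g,V) = 1, a trace argument shows
         that the (symmetric) Ricci tensor of any element of K(g,V) commutes with g.
         The Ricci tensor of R^T is -3 times the Gram matrix B_xy = <x_|T, y_|T>
         (with the full double sum), so B commutes with g; by Schur's lemma for
         symmetric matrices (eigenvectors exist over a real closed field, via the
         spectral theorem in R[i]) B is scalar, and its trace 6|T|^2 fixes the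
         scalar.  The claimed identity is then B/2 = (3/n)|T|^2 Id. *)

Section SymmetricEigenvector.
Variable R : rcfType.
Local Open Scope complex_scope.

Lemma real_complex_real (x : R) : x%:C \is Num.real.
Proof. by rewrite realE ler0c -[X in x%:C <= X]/((0 : R)%:C) lecR -realE num_real. Qed.

Lemma real_complexRe (z : R[i]) : z \is Num.real -> z = (complex.Re z)%:C.
Proof.
case: z => a b; rewrite realE !lecE /=.
by case/orP => /andP [/eqP hb _]; rewrite -complexr0 ?hb // -hb.
Qed.

(* A symmetric matrix over a real closed field has a (real) eigenvector: its image
   in R[i] is hermitian, hence unitarily diagonalisable with real eigenvalues, and a
   real root of the characteristic polynomial is an eigenvalue over R. *)
Lemma sym_eigenvector m (S : 'M[R]_m.+1) : S^T = S ->
  exists l (v : 'rV[R]_m.+1), v != 0 /\ v *m S = l *: v.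
Proof.
move=> hS; set f := real_complex R; set S' := map_mx f S.
have herm : S' \is hermsymmx.
  apply: realsym_hermsym.
    rewrite qualifE /= expr0 scale1r map_mx_id //; apply/eqP/matrixP => i j.
    by rewrite !mxE -{1}hS mxE.
  by apply/mxOverP => i j; rewrite mxE real_complex_real.
have /orthomx_spectralP hdec := hermitian_normalmx herm.
set P := spectralmx S' in hdec; set d := spectral_diag S' in hdec.
have Pu : P \in unitmx by apply: spectral_unit.
have eig' : eigenvalue S' (d 0 0).
  apply/eigenvalueP; exists (row 0 P).
    rewrite -row_mul {1}hdec !mulmxA mulmxV // mul1mx mul_diag_mx.
    by apply/rowP => j; rewrite !mxE.
  apply/eqP => /(congr1 (mulmx^~ (invmx P))); rewrite -row_mul mulmxV // mul0mx.
  by move/rowP/(_ 0)/eqP; rewrite !mxE eqxx oner_eq0.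
have dreal : d 0 0 \is Num.real.
  by have /mxOverP := hermitian_spectral_diag_real herm; apply.
have /eigenvalueP [v hv vn0] : eigenvalue S (complex.Re (d 0 0)).
  move: eig'; rewrite !eigenvalue_root_char /S' -map_char_poly (real_complexRe dreal).
  by rewrite fmorph_root.
by exists (complex.Re (d 0 0)), v.
Qed.

End SymmetricEigenvector.

(* Schur's lemma for symmetric matrices: a symmetric endomorphism commuting with an
   irreducible g is a multiple of the identity (its eigenspace is g-invariant). *)
Lemma symmetric_commutant_scalar (R : rcfType) n (G : 'A[R]_n) (B : 'M[R]_n) :
  irreducible G -> B^T = B -> (forall F, (F \in G)%MS -> F *m B = B *m F) ->
  exists c, B = c%:M.
Proof.
case: n G B => [|m] G B [//= _ hirr] hB hcomm.
have [l [v [vn0 hv]]] := sym_eigenvector hB.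
set U := kermx (B - l%:M).
have hU : forall F, (F \in G)%MS -> (U *m F <= U)%MS.
  move=> F hF; apply/sub_kermxP; rewrite -mulmxA mulmxBr (hcomm F hF) mul_mx_scalar.
  by rewrite -mul_scalar_mx -mulmxBl mulmxA mulmx_ker mul0mx.
have vU : (v <= U)%MS by apply/sub_kermxP; rewrite mulmxBr hv mul_mx_scalar subrr.
exists l; case/orP: (hirr U hU) => /andP [hU0 hU1].
  by have := submx_trans vU hU0; rewrite submx0 (negbTE vn0).
by move/sub_kermxP: hU1; rewrite mul1mx => /eqP; rewrite subr_eq0 => /eqP.
Qed.

Section Coordinates.
Variables (R : rcfType) (n : nat).
Implicit Types (T : form3 R n) (X Y : 'rV[R]_n) (A B : 'M[R]_n)
  (Rc : 'I_n -> 'I_n -> 'M[R]_n).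

Lemma sum_ebas (i : 'I_n) (F : 'I_n -> R) : \sum_l ebas R i 0 l * F l = F i.
Proof.
rewrite (bigD1 i) //= big1 ?addr0 => [|l li]; first by rewrite mxE !eqxx mul1r.
by rewrite mxE eqxx (negbTE li) mul0r.
Qed.

Lemma sum_ebas_index (a : 'I_n) (F : 'I_n -> R) : \sum_i ebas R i 0 a * F i = F a.
Proof.
rewrite (bigD1 a) //= big1 ?addr0 => [|i ia]; first by rewrite mxE !eqxx mul1r.
by rewrite mxE eqxx eq_sym (negbTE ia) mul0r.
Qed.

Lemma TxE T X j k : Tx T X j k = \sum_i X 0 i * T i j k.
Proof. by rewrite mxE. Qed.

Lemma Tx_ebas T i j k : Tx T (ebas R i) j k = T i j k.
Proof. by rewrite TxE sum_ebas. Qed.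

Lemma lieE A B b c : lie A B b c = \sum_k (B b k * A k c - A b k * B k c).
Proof. by rewrite !mxE sumrB. Qed.

Lemma RTcE T i j b c : RTc T i j b c =
  \sum_k (T j b k * T i k c - T i b k * T j k c) + 2 * \sum_k T i j k * T k b c.
Proof.
rewrite /RTc /RTf mxE lieE mxE TxE; congr (_ + _ * _).
  by apply: eq_bigr => k _; rewrite !Tx_ebas.
by apply: eq_bigr => k _; rewrite mxE sum_ebas Tx_ebas.
Qed.

Lemma RappE Rc X Y b c : Rapp Rc X Y b c = \sum_i \sum_j X 0 i * Y 0 j * Rc i j b c.
Proof.
rewrite summxE; apply: eq_bigr => i _; rewrite summxE.
by apply: eq_bigr => j _; rewrite mxE.
Qed.

Lemma Rapp_ebas Rc i Y b c : Rapp Rc (ebas R i) Y b c = \sum_j Y 0 j * Rc i j b c.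
Proof.
rewrite RappE -(sum_ebas i (fun l => \sum_j Y 0 j * Rc l j b c)).
by apply: eq_bigr => l _; rewrite mulr_sumr; apply: eq_bigr => j _; rewrite mulrA.
Qed.

Lemma Rapp_ebas2 Rc i j : Rapp Rc (ebas R i) (ebas R j) = Rc i j.
Proof. by apply/matrixP => b c; rewrite Rapp_ebas sum_ebas. Qed.

Lemma bianchi_sumE Rc X a b c :
  \sum_i wedge12 (ebas R i) (Rapp Rc (ebas R i) X) a b c =
  \sum_x X 0 x * (Rc a x b c + Rc b x c a + Rc c x a b).
Proof.
rewrite /wedge12 !big_split /= !sum_ebas_index !Rapp_ebas -!big_split /=.
by apply: eq_bigr => x _; rewrite !mulrDr.
Qed.

Lemma linear_expand (f : 'rV[R]_n -> 'M[R]_n) :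
  (forall a u v, f (a *: u + v) = a *: f u + f v) ->
  forall X, f X = \sum_i X 0 i *: f (ebas R i).
Proof.
move=> hf X.
have f0 : f 0 = 0.
  have := hf 1 0 0; rewrite scaler0 addr0 scale1r => /(congr1 (fun z => z - f 0)).
  by rewrite subrr addrK => <-.
by rewrite {1}(row_sum_delta X); elim/big_rec2: _ => [|i y1 y2 _ <-].
Qed.

Lemma bilinear_Rapp (f : 'rV[R]_n -> 'rV[R]_n -> 'M[R]_n) :
  (forall a u v Y, f (a *: u + v) Y = a *: f u Y + f v Y) ->
  (forall a u v X, f X (a *: u + v) = a *: f X u + f X v) ->
  forall X Y, f X Y = Rapp (fun i j => f (ebas R i) (ebas R j)) X Y.
Proof.
move=> hl hr X Y; rewrite (linear_expand (fun a u v => hl a u v Y) X).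
apply: eq_bigr => i _.
rewrite (linear_expand (fun a u v => hr a u v (ebas R i)) Y) scaler_sumr.
by apply: eq_bigr => j _; rewrite scalerA.
Qed.

Lemma Tx_linear T a u v : Tx T (a *: u + v) = a *: Tx T u + Tx T v.
Proof.
apply/matrixP => j k; rewrite !mxE mulr_sumr -big_split /=.
by apply: eq_bigr => i _; rewrite !mxE mulrDl mulrA.
Qed.

Lemma lie_linearl a A A' B : lie (a *: A + A') B = a *: lie A B + lie A' B.
Proof. by rewrite /lie mulmxDr mulmxDl -scalemxAl -scalemxAr scalerBr opprD addrACA. Qed.

Lemma lie_linearr a A B B' : lie A (a *: B + B') = a *: lie A B + lie A B'.
Proof. by rewrite /lie mulmxDr mulmxDl -scalemxAl -scalemxAr scalerBr opprD addrACA. Qed.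

Lemma RTf_Rapp T X Y : RTf T X Y = Rapp (RTc T) X Y.
Proof.
have regroup (p q r s : 'M[R]_n) a :
    a *: p + q + 2 *: (a *: r + s) = a *: (p + 2 *: r) + (q + 2 *: s).
  by rewrite !scalerDr !scalerA mulrC addrACA.
apply: bilinear_Rapp => a u v Z; rewrite /RTf /act Tx_linear.
  by rewrite lie_linearl mulmxDr -scalemxAr Tx_linear regroup.
by rewrite lie_linearr mulmxDl -scalemxAl Tx_linear regroup.
Qed.

End Coordinates.

Section AlternatingForm.
Variables (R : rcfType) (n : nat) (T : form3 R n).
Hypothesis hT : alt3 T.
Implicit Types (X Y : 'rV[R]_n) (A B : 'M[R]_n).

Lemma T_swap12 i j k : T i j k = - T j i k. Proof. by case: (hT i j k). Qed.
Lemma T_swap23 i j k : T i j k = - T i k j. Proof. by case: (hT i j k). Qed.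
Lemma T_cycle i j k : T i j k = T j k i. Proof. by rewrite T_swap12 T_swap23 opprK. Qed.

Lemma T_diag i k : T i i k = 0.
Proof. by apply/eqP; move: (T_swap12 i i k) => /eqP; rewrite -addr_eq0 -mulr2n mulrn_eq0. Qed.

Lemma Tx_skew X : (Tx T X)^T = - Tx T X.
Proof.
apply/matrixP => j k; rewrite !mxE -sumrN; apply: eq_bigr => i _.
by rewrite (T_swap23 i k j) mulrN.
Qed.

Lemma lie_skew A B : A^T = - A -> B^T = - B -> (lie A B)^T = - lie A B.
Proof.
move=> hA hB; rewrite /lie linearB /= !trmx_mul hA hB !mulmxN !mulNmx !opprK.
by rewrite opprB.
Qed.

Lemma RTf_skew X Y : (RTf T X Y)^T = - RTf T X Y.
Proof. by rewrite /RTf linearD linearZ /= lie_skew ?Tx_skew // scalerN [RHS]opprD. Qed.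

(* R^T(e_j,e_i) = - R^T(e_i,e_j), using T_{T_X Y} = - T_{T_Y X}. *)
Lemma RTc_antisym i j : RTc T i j = - RTc T j i.
Proof.
apply/matrixP => b c; rewrite [RHS]mxE !RTcE opprD -mulrN -!sumrN.
congr (_ + _ * _); apply: eq_bigr => k _; last by rewrite (T_swap12 j i k) mulNr opprK.
by rewrite opprB.
Qed.

Lemma RTc_bianchi x a b c : RTc T a x b c + RTc T b x c a + RTc T c x a b = 0.
Proof.
rewrite !RTcE !mulr_sumr -!big_split /= big1 // => k _.
rewrite -(T_cycle c a k) (T_swap23 x k c) (T_swap12 a x k) (T_cycle k b c).
rewrite -(T_cycle a b k) (T_swap23 x k a) (T_swap12 b x k) (T_cycle k c a).
rewrite -(T_cycle b c k) (T_swap23 x k b) (T_swap12 c x k) (T_cycle k a b).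
ring.
Qed.

Lemma RTc_sectional i j : RTc T i j j i = - (\sum_k T i j k ^+ 2) *+ 3.
Proof.
have e1 : \sum_k (T j j k * T i k i - T i j k * T j k i) = - \sum_k T i j k ^+ 2.
  rewrite -sumrN; apply: eq_bigr => k _.
  by rewrite T_diag mul0r sub0r -(T_cycle i j k) expr2.
have e2 : \sum_k T i j k * T k j i = - \sum_k T i j k ^+ 2.
  rewrite -sumrN; apply: eq_bigr => k _.
  by rewrite (T_swap12 k j i) -(T_cycle i j k) mulrN expr2.
rewrite RTcE e1 e2; ring.
Qed.

(* Part (iii): R^T = 0 iff T = 0; the sectional values detect every T_ijk. *)
Lemma RT_eq0_iff : (forall X Y, RTf T X Y = 0) <-> (forall i j k, T i j k = 0).
Proof.
split=> [hR i j k | hT0 X Y].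
  have := congr1 (fun M : 'M[R]_n => M j i) (hR (ebas R i) (ebas R j)).
  rewrite /= -/(RTc T i j) RTc_sectional mxE => /eqP.
  rewrite mulrn_eq0 /= oppr_eq0 => /eqP /psumr_eq0P sq0.
  by apply/eqP; rewrite -sqrf_eq0 sq0 // => l _; exact: sqr_ge0.
have Tx0 Z : Tx T Z = 0.
  by apply/matrixP => j k; rewrite !mxE big1 // => i _; rewrite hT0 mulr0.
by rewrite /RTf !Tx0 /lie mulmx0 subrr add0r scaler0.
Qed.

End AlternatingForm.

Section Membership.
Variables (R : rcfType) (n : nat) (G : 'A[R]_n).
Implicit Types (A B : 'M[R]_n).

Lemma memG_add A B : (A \in G)%MS -> (B \in G)%MS -> (A + B \in G)%MS.
Proof. by move=> hA hB; rewrite linearD addmx_sub. Qed.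

Lemma memG_scale a A : (A \in G)%MS -> (a *: A \in G)%MS.
Proof. by move=> hA; rewrite linearZ scalemx_sub. Qed.

Lemma memG_sub A B : (A \in G)%MS -> (B \in G)%MS -> (A - B \in G)%MS.
Proof. by move=> hA hB; rewrite -scaleN1r memG_add ?memG_scale. Qed.

Lemma memG_sum (I : finType) (F : I -> 'M[R]_n) :
  (forall i, (F i \in G)%MS) -> (\sum_i F i \in G)%MS.
Proof. by move=> hF; rewrite linear_sum; apply: summx_sub => i _; apply: hF. Qed.

Lemma Rapp_mem Rc X Y : (forall i j, (Rc i j \in G)%MS) -> (Rapp Rc X Y \in G)%MS.
Proof. by move=> h; apply: memG_sum => i; apply: memG_sum => j; apply: memG_scale. Qed.

End Membership.

Lemma RT_in_K (R : rcfType) n (G : 'A[R]_n) (T : form3 R n) :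
  so_subalg G -> alt3 T -> (forall X, (Tx T X \in G)%MS) -> Kmem G (RTc T).
Proof.
move=> [_ hlie] hT hTG; split.
- exact: RTc_antisym.
- by move=> i j; rewrite /RTc RTf_skew.
- by move=> X Y; rewrite -RTf_Rapp /RTf memG_add ?memG_scale ?hlie ?hTG.
- move=> X a b c; rewrite bianchi_sumE big1 // => x _.
  by rewrite RTc_bianchi // mulr0.
Qed.

Section Wedge.
Variables (R : rcfType) (n : nat) (u : 'M[R]_n).
Hypothesis hu : forall p q, u p q = - u q p.

Lemma wedge22_alt : alt4 (wedge22 u u).
Proof.
move=> a b c d; rewrite /wedge22.
by split; [rewrite (hu b a) | rewrite (hu c b) | rewrite (hu d c)]; ring.
Qed.

Lemma wedge22_half a b c d :
  2^-1 * wedge22 u u a b c d = u a b * u c d - u a c * u b d + u a d * u b c.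
Proof.
have -> : wedge22 u u a b c d = 2 * (u a b * u c d - u a c * u b d + u a d * u b c).
  by rewrite /wedge22; ring.
by rewrite mulKf // pnatr_eq0.
Qed.

End Wedge.

Section OmegaT.
Variables (R : rcfType) (n : nat) (T : form3 R n).
Hypothesis hT : alt3 T.

Lemma Tebas_skew i p q : Tx T (ebas R i) p q = - Tx T (ebas R i) q p.
Proof. by rewrite !Tx_ebas (T_swap23 hT). Qed.

Lemma OmegaT_alt : alt4 (OmegaT T).
Proof.
move=> a b c d; rewrite /OmegaT.
by split; rewrite -mulrN -sumrN; congr (_ * _); apply: eq_bigr => i _;
  case: (wedge22_alt (Tebas_skew i) a b c d).
Qed.

Lemma contr2_OmegaT X Y :
  contr2 (OmegaT T) X Y = lie (Tx T X) (Tx T Y) - Tx T (act (Tx T X) Y).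
Proof.
apply/matrixP => c d.
transitivity (\sum_a \sum_b \sum_k (Y 0 a * X 0 b *
   (T k a b * T k c d - T k a c * T k b d + T k a d * T k b c))).
  rewrite mxE; apply: eq_bigr => a _; apply: eq_bigr => b _.
  rewrite /OmegaT mulr_sumr mulr_sumr; apply: eq_bigr => k _.
  by rewrite wedge22_half !Tx_ebas.
have e1 : lie (Tx T X) (Tx T Y) c d = \sum_k \sum_a \sum_b
   (Y 0 a * T a c k * (X 0 b * T b k d) - Y 0 a * T a k d * (X 0 b * T b c k)).
  rewrite lieE; apply: eq_bigr => k _; rewrite !TxE.
  rewrite [X in _ - X]mulrC !mulr_suml -sumrB; apply: eq_bigr => a _.
  by rewrite !mulr_sumr -sumrB.
have e2 : Tx T (act (Tx T X) Y) c d = \sum_k \sum_a \sum_b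
   (Y 0 a * (X 0 b * T b a k) * T k c d).
  rewrite TxE; apply: eq_bigr => k _; rewrite mxE mulr_suml; apply: eq_bigr => a _.
  by rewrite TxE mulr_sumr mulr_suml.
symmetry; rewrite mxE [X in X + _]e1 mxE e2 -sumrB.
under eq_bigr do rewrite -sumrB; under eq_bigr do under eq_bigr do rewrite -sumrB.
rewrite exchange_big; apply: eq_bigr => a _; rewrite exchange_big; apply: eq_bigr => b _.
apply: eq_bigr => k _.
rewrite -(T_cycle hT k a c) (T_swap23 hT b k d) -(T_cycle hT k b d) (T_swap23 hT a k d).
rewrite -(T_cycle hT k a d) -(T_cycle hT k b c) -(T_cycle hT k b a) (T_swap23 hT k b a).
ring.
Qed.

Lemma OmegaT_contr2_mem (G : 'A[R]_n) : so_subalg G -> (forall X, (Tx T X \in G)%MS) ->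
  forall X Y, (contr2 (OmegaT T) X Y \in G)%MS.
Proof. by move=> [_ hlie] hTG X Y; rewrite contr2_OmegaT memG_sub ?hlie. Qed.

End OmegaT.

Lemma skew_entries (R : rcfType) n (A : 'M[R]_n) : A^T = - A -> forall p q, A p q = - A q p.
Proof. by move=> hA p q; have := congr1 (fun M : 'M[R]_n => M q p) hA; rewrite !mxE. Qed.

Section CurvatureAction.
Variables (R : rcfType) (n : nat) (G : 'A[R]_n).
Hypothesis hG : so_subalg G.
Implicit Types (A : 'M[R]_n) (Rc : 'I_n -> 'I_n -> 'M[R]_n).

(* Action of A in so(V) on curvature tensors, by derivations:
   (A.R)(e_i,e_j) = [A, R(e_i,e_j)] - R(A e_i, e_j) - R(e_i, A e_j). *)
Definition curv_act A Rc i j : 'M[R]_n :=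
  lie A (Rc i j) - \sum_k A i k *: Rc k j - \sum_k A j k *: Rc i k.

Lemma curv_actE A Rc i j b c : curv_act A Rc i j b c = \sum_k
  (Rc i j b k * A k c - A b k * Rc i j k c - A i k * Rc k j b c - A j k * Rc i k b c).
Proof.
rewrite /curv_act !mxE !summxE -!sumrB.
by apply: eq_bigr => k _; rewrite !mxE.
Qed.

Lemma Kmem_bianchi Rc : Kmem G Rc ->
  forall x a b c, Rc a x b c + Rc b x c a + Rc c x a b = 0.
Proof.
by case=> _ _ _ hb x a b c; have := hb (ebas R x) a b c; rewrite bianchi_sumE sum_ebas.
Qed.

Lemma curv_act_K A Rc : (A \in G)%MS -> Kmem G Rc -> Kmem G (curv_act A Rc).
Proof.
move=> hAG hK; have hA : A^T = - A by case: hG => h _; apply: h.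
have hAe := skew_entries hA; have hbc := Kmem_bianchi hK.
case: hK => hanti hskew hmem _.
have hae i j b c : Rc i j b c = - Rc j i b c by rewrite hanti mxE.
have hse i j : forall b c, Rc i j b c = - Rc i j c b by apply: skew_entries.
split.
- move=> i j; apply/matrixP => b c; rewrite [RHS]mxE !curv_actE -sumrN.
  apply: eq_bigr => k _.
  rewrite (hae i j b k) (hae i j k c) (hae k j b c) (hae i k b c); ring.
- move=> i j; apply/matrixP => b c; rewrite [RHS]mxE mxE !curv_actE -sumrN.
  apply: eq_bigr => k _.
  rewrite (hse i j c k) (hAe k b) (hAe c k) (hse i j k b) (hse k j c b) (hse i k c b); ring.
- have hRG i j : (Rc i j \in G)%MS by rewrite -(Rapp_ebas2 Rc i j) hmem.
  case: hG => _ hlie X Y; apply: Rapp_mem => i j.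
  apply: memG_sub; first apply: memG_sub; first exact: hlie.
    by apply: memG_sum => k; apply: memG_scale.
  by apply: memG_sum => k; apply: memG_scale.
- move=> X a b c; rewrite bianchi_sumE big1 // => x _; apply/eqP.
  rewrite mulf_eq0; apply/orP; right; apply/eqP.
  rewrite !curv_actE -!big_split /= big1 // => k _.
  (* the sum regroups into four cyclic Bianchi sums of Rc *)
  transitivity (- (A x k * (Rc a k b c + Rc b k c a + Rc c k a b)
     + A c k * (Rc a x b k + Rc b x k a + Rc k x a b)
     + A a k * (Rc b x c k + Rc c x k b + Rc k x b c)
     + A b k * (Rc c x a k + Rc a x k c + Rc k x c a))).
    by rewrite (hAe k c) (hAe k a) (hAe k b); ring.
  by rewrite (hbc k a b c) (hbc x a b k) (hbc x b c k) (hbc x c a k) !mulr0 !addr0 oppr0.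
Qed.

Definition ricci Rc : 'M[R]_n := \matrix_(x, y) \sum_i Rc i x y i.

Lemma ricci_act A Rc : A^T = - A -> ricci (curv_act A Rc) = ricci Rc *m A - A *m ricci Rc.
Proof.
move=> hA; have hAe := skew_entries hA.
apply/matrixP => x y; rewrite !mxE.
under eq_bigr do rewrite curv_actE !sumrB.
rewrite !sumrB.
have e1 : \sum_i \sum_k A i k * Rc k x y i = \sum_i \sum_k Rc i x y k * A k i.
  by rewrite exchange_big; apply: eq_bigr => i _; apply: eq_bigr => k _; rewrite mulrC.
have e2 : \sum_i \sum_k A y k * Rc i x k i = - \sum_j ricci Rc x j * A j y.
  rewrite exchange_big -sumrN; apply: eq_bigr => k _.
  by rewrite mxE -mulr_sumr (hAe k y) mulrN opprK mulrC.
have e3 : \sum_i \sum_k A x k * Rc i k y i = \sum_j A x j * ricci Rc j y.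
  by rewrite exchange_big; apply: eq_bigr => k _; rewrite mxE mulr_sumr.
rewrite e1 e2 e3; ring.
Qed.

Lemma ricci_scale (c : R) Rc Rc' :
  (forall i j, Rc' i j = c *: Rc i j) -> ricci Rc' = c *: ricci Rc.
Proof.
move=> h; apply/matrixP => x y; rewrite !mxE mulr_sumr.
by apply: eq_bigr => i _; rewrite h mxE.
Qed.

End CurvatureAction.

(* A trace form criterion: tr(S S^T) = sum of squares of the entries of S. *)
Lemma trace_sqr_eq0 (R : rcfType) n (S : 'M[R]_n) : \tr (S *m S^T) = 0 -> S = 0.
Proof.
have trE : \tr (S *m S^T) = \sum_x \sum_y S x y ^+ 2.
  by apply: eq_bigr => x _; rewrite mxE; apply: eq_bigr => y _; rewrite mxE expr2.
have sq_ge0 x : 0 <= \sum_y S x y ^+ 2 by apply: sumr_ge0 => y _; exact: sqr_ge0.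
rewrite trE => /psumr_eq0P h0; apply/matrixP => x y; rewrite mxE.
have /psumr_eq0P hx := h0 (fun x _ => sq_ge0 x) x isT.
by apply/eqP; rewrite -sqrf_eq0 hx // => z _; exact: sqr_ge0.
Qed.

(* Indeed A.R = c R, so c Ric = [Ric, A],
   and c tr(Ric Ric^T) = tr(Ric A Ric - A Ric Ric) = 0. *)
Lemma ricci_commutes (R : rcfType) n (G : 'A[R]_n) Rc :
  so_subalg G -> dimK1 G -> Kmem G Rc -> (ricci Rc)^T = ricci Rc ->
  forall A, (A \in G)%MS -> A *m ricci Rc = ricci Rc *m A.
Proof.
move=> hG [R0 [_ _ huniq]] hK Ssym A hAG; set S := ricci Rc.
have hA : A^T = - A by case: hG => h _; apply: h.
have [mu hmu] := huniq _ hK; have [c hc] := huniq _ (curv_act_K hG hAG hK).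
have [mu0|mun0] := eqVneq mu 0.
  have S0 : S = 0 by rewrite /S (ricci_scale (Rc := R0) (c := 0)) ?scale0r // => i j; rewrite hmu mu0.
  by rewrite S0 mul0mx mulmx0.
have hact : ricci (curv_act A Rc) = (c / mu) *: S.
  by apply: ricci_scale => i j; rewrite hc hmu scalerA divfK.
have comm : S *m A - A *m S = (c / mu) *: S by rewrite -hact ricci_act.
have tr0 : (c / mu) * \tr (S *m S^T) = 0.
  rewrite Ssym -mxtraceZ scalemxAl -comm mulmxBl -!mulmxA raddfB /=.
  by rewrite mxtrace_mulC -mulmxA subrr.
move/eqP: tr0; rewrite mulf_eq0 => /orP [/eqP k0 | /eqP /trace_sqr_eq0 ->].
  by move/eqP: comm; rewrite k0 scale0r subr_eq0 => /eqP.
by rewrite mul0mx mulmx0.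
Qed.

Section PairSums.
Variables (R : rcfType) (n : nat).

Lemma sum_sym_pairs (F : 'I_n -> 'I_n -> R) :
  (forall a b, F a b = F b a) -> (forall a, F a a = 0) ->
  \sum_a \sum_b F a b = (\sum_(a : 'I_n) \sum_(b : 'I_n) (a < b)%N%:R * F a b) *+ 2.
Proof.
move=> Fsym Fdiag.
have split_pair (a b : 'I_n) : F a b = (a < b)%N%:R * F a b + (b < a)%N%:R * F b a.
  case: (ltngtP a b) => [_|_|/val_inj ->]; rewrite ?Fdiag ?mulr0 ?addr0 //.
  - by rewrite mul1r mul0r addr0.
  - by rewrite mul0r add0r mul1r Fsym.
under eq_bigr do under eq_bigr do rewrite split_pair.
rewrite mulr2n; under eq_bigr do rewrite big_split /=; rewrite big_split /=.
by congr (_ + _); rewrite exchange_big.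
Qed.

Lemma form2_dot_half (u w : 'M[R]_n) :
  (forall p q, u p q = - u q p) -> (forall p q, w p q = - w q p) ->
  form2_dot u w = 2^-1 * \sum_a \sum_b u a b * w a b.
Proof.
move=> hu hw.
rewrite (sum_sym_pairs (F := fun a b => u a b * w a b)); first last.
- move=> a; have /eqP := hu a a.
  by rewrite -addr_eq0 -mulr2n mulrn_eq0 /= => /eqP ->; rewrite mul0r.
- by move=> a b; rewrite (hu a b) (hw a b) mulrNN.
set P := \sum_(a : 'I_n) _; have -> : 2^-1 * (P *+ 2) = P by field.
apply: eq_bigr => a _; rewrite big_mkcond; apply: eq_bigr => b _.
by case: (a < b)%N; rewrite ?mul1r ?mul0r.
Qed.

Lemma sum_sym3 (F : 'I_n -> 'I_n -> 'I_n -> R) :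
  (forall x a b, F x a b = F a x b) -> (forall x a b, F x a b = F x b a) ->
  (forall x b, F x x b = 0) ->
  \sum_(x : 'I_n) \sum_(a : 'I_n) \sum_(b : 'I_n) F x a b =
  (\sum_(x : 'I_n) \sum_(a : 'I_n | (x < a)%N) \sum_(b : 'I_n | (a < b)%N) F x a b) *+ 6.
Proof.
move=> F12 F23 Fdiag.
have Fdiag23 x a : F x a a = 0 by rewrite F12 F23 Fdiag.
have Fdiag13 x a : F x a x = 0 by rewrite F23 Fdiag.
set N := \sum_(x : 'I_n) \sum_(a : 'I_n | (x < a)%N) _.
have normE : N = \sum_(x : 'I_n) \sum_(a : 'I_n) \sum_(b : 'I_n) (x < a)%N%:R * ((a < b)%N%:R * F x a b).
  apply: eq_bigr => x _; rewrite big_mkcond; apply: eq_bigr => a _.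
  case: (x < a)%N; last by symmetry; apply: big1 => b _; rewrite mul0r.
  rewrite big_mkcond; apply: eq_bigr => b _.
  by case: (a < b)%N; rewrite ?mul1r ?mul0r.
(* the pair (x, a) is symmetric: restrict to x < a *)
have total : \sum_(x : 'I_n) \sum_(a : 'I_n) \sum_(b : 'I_n) F x a b =
    (\sum_(x : 'I_n) \sum_(a : 'I_n) \sum_(b : 'I_n) (x < a)%N%:R * F x a b) *+ 2.
  rewrite (sum_sym_pairs (F := fun x a => \sum_b F x a b)); first last.
  - by move=> x; rewrite big1 // => b _; rewrite Fdiag.
  - by move=> x a; apply: eq_bigr => b _; rewrite F12.
  by congr (_ *+ 2); apply: eq_bigr => x _; apply: eq_bigr => a _; rewrite mulr_sumr.
(* for x < a, either a < b (an increasing triple) or b < a *)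
have split_b : \sum_(x : 'I_n) \sum_(a : 'I_n) \sum_(b : 'I_n) (x < a)%N%:R * F x a b =
    N + \sum_(x : 'I_n) \sum_(a : 'I_n) \sum_(b : 'I_n) (x < a)%N%:R * ((b < a)%N%:R * F x a b).
  rewrite normE -big_split; apply: eq_bigr => x _; rewrite -big_split.
  apply: eq_bigr => a _; rewrite -big_split; apply: eq_bigr => b _.
  by case: (ltngtP a b) => [_|_|/val_inj ->]; rewrite /= ?Fdiag23; ring.
(* for x, b < a, either x < b < a or b < x < a: both are increasing triples *)
have split_x : \sum_(x : 'I_n) \sum_(a : 'I_n) \sum_(b : 'I_n) (x < a)%N%:R * ((b < a)%N%:R * F x a b) = N + N.
  transitivity (\sum_(x : 'I_n) \sum_(a : 'I_n) \sum_(b : 'I_n) ((x < b)%N%:R * ((b < a)%N%:R * F x b a)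
                   + (b < x)%N%:R * ((x < a)%N%:R * F b x a))).
    apply: eq_bigr => x _; apply: eq_bigr => a _; apply: eq_bigr => b _.
    rewrite -F23 -F12; case: (ltngtP x b) => [xb|bx|/val_inj ->]; last by rewrite Fdiag; ring.
      by case: (ltnP b a) => ba; rewrite ?(ltn_trans xb ba) /=; ring.
    by case: (ltnP x a) => xa; rewrite ?(ltn_trans bx xa) /=; ring.
  under eq_bigr do under eq_bigr do rewrite big_split.
  under eq_bigr do rewrite big_split.
  rewrite big_split /= normE; congr (_ + _).
    by apply: eq_bigr => x _; rewrite exchange_big.
  by under eq_bigr do rewrite exchange_big; rewrite exchange_big.
rewrite total split_b split_x; ring.
Qed.

End PairSums.

Section Gram.
Variables (R : rcfType) (n : nat) (T : form3 R n).
Hypothesis hT : alt3 T.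

(* Gram matrix of the 2-forms x _| T, with the full double sum:
   B_xy = sum_ab T_xab T_yab = 2 <e_x _| T, e_y _| T>. *)
Definition Tgram : 'M[R]_n := \matrix_(x, y) \sum_a \sum_b T x a b * T y a b.

Lemma Tgram_sym : Tgram^T = Tgram.
Proof.
apply/matrixP => x y; rewrite !mxE.
by apply: eq_bigr => a _; apply: eq_bigr => b _; rewrite mulrC.
Qed.

Lemma Tx_gram X Y : \sum_a \sum_b Tx T X a b * Tx T Y a b =
  \sum_x \sum_y X 0 x * Y 0 y * Tgram x y.
Proof.
transitivity (\sum_a \sum_b \sum_x \sum_y X 0 x * T x a b * (Y 0 y * T y a b)).
  apply: eq_bigr => a _; apply: eq_bigr => b _; rewrite !TxE mulr_suml.
  by apply: eq_bigr => x _; rewrite mulr_sumr.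
under eq_bigr do rewrite exchange_big.
under eq_bigr do under eq_bigr do rewrite exchange_big.
rewrite exchange_big; apply: eq_bigr => x _.
rewrite exchange_big; apply: eq_bigr => y _.
rewrite mxE mulr_sumr; apply: eq_bigr => a _; rewrite mulr_sumr; apply: eq_bigr => b _.
ring.
Qed.

Lemma ricci_RT : ricci (RTc T) = - (Tgram *+ 3).
Proof.
apply/matrixP => x y; rewrite !mxE.
transitivity (\sum_i \sum_k - (T x k i * T y k i *+ 3)).
  apply: eq_bigr => i _; rewrite RTcE mulr_sumr -big_split /=.
  apply: eq_bigr => k _.
  rewrite (T_swap23 hT i k i) (T_diag hT) (T_cycle hT i y k) (T_cycle hT i x k).
  rewrite (T_swap12 hT k y i).
  ring.
rewrite exchange_big; under eq_bigr do rewrite sumrN sumrMnl.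
by rewrite sumrN sumrMnl; ring.
Qed.

End Gram.

Lemma Tx_dot_identity (R : rcfType) n (G : 'A[R]_n) (T : form3 R n) :
  so_subalg G -> alt3 T -> (forall X, (Tx T X \in G)%MS) ->
  irreducible G -> dimK1 G ->
  forall X Y, form2_dot (Tx T X) (Tx T Y) = 3 / n%:R * form3_norm2 T * vdot X Y.
Proof.
move=> hG hT hTG hirr hK1 X Y.
have ricciE : ricci (RTc T) = - 3 *: Tgram T.
  by rewrite (ricci_RT hT); apply/matrixP => i j; rewrite !mxE; ring.
(* B commutes with g, hence is a scalar beta by Schur's lemma *)
have gram_comm A : (A \in G)%MS -> A *m Tgram T = Tgram T *m A.
  move=> hA; have := ricci_commutes hG hK1 (RT_in_K hG hT hTG) _ hA.
  rewrite ricciE -scalemxAl -scalemxAr => /(_ _)/scalerI; apply.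
    by rewrite oppr_eq0 pnatr_eq0.
  by rewrite linearZ /= Tgram_sym.
have [beta gramE] := symmetric_commutant_scalar hirr (Tgram_sym T) gram_comm.
(* taking traces, n beta = sum_xab T_xab^2 = 6 |T|^2 *)
have traceE : beta *+ n = form3_norm2 T *+ 6.
  rewrite -mxtrace_scalar -gramE -(sum_sym3 (F := fun x a b => T x a b ^+ 2)).
  - apply: eq_bigr => x _; rewrite mxE.
    by apply: eq_bigr => a _; apply: eq_bigr => b _; rewrite expr2.
  - by move=> x a b; rewrite (T_swap12 hT) sqrrN.
  - by move=> x a b; rewrite (T_swap23 hT) sqrrN.
  - by move=> x b; rewrite (T_diag hT) expr0n.
have dotE : \sum_x \sum_y X 0 x * Y 0 y * (beta%:M : 'M[R]_n) x y = beta * vdot X Y.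
  rewrite /vdot mxE mulr_sumr; apply: eq_bigr => x _.
  rewrite (bigD1 x) //= big1 ?addr0 => [|y yx]; first by rewrite !mxE eqxx mulr1n mulrC.
  by rewrite mxE eq_sym (negbTE yx) mulr0n mulr0.
have n_neq0 : n%:R != 0 :> R by case: hirr => n_gt0 _; rewrite pnatr_eq0 -lt0n.
have Tx_entries Z := skew_entries (Tx_skew hT Z).
rewrite (form2_dot_half (Tx_entries X) (Tx_entries Y)) Tx_gram gramE dotE.
have -> : beta = form3_norm2 T *+ 6 / n%:R by rewrite -traceE -[beta *+ n]mulr_natr mulfK.
by field.
Qed.

Theorem lemma3p1 (R : rcfType) (n : nat) (G : 'A[R]_n) (T : form3 R n) :
  so_subalg G -> alt3 T -> (forall X : 'rV[R]_n, (Tx T X \in G)%MS) ->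
  [/\ (forall X Y, RTf T X Y = Rapp (RTc T) X Y) /\ Kmem G (RTc T),
      alt4 (OmegaT T) /\ (forall X Y, (contr2 (OmegaT T) X Y \in G)%MS),
      ((forall X Y, RTf T X Y = 0) <-> (forall i j k, T i j k = 0))
    & (irreducible G -> dimK1 G ->
       forall X Y, form2_dot (Tx T X) (Tx T Y) = 3 / n%:R * form3_norm2 T * vdot X Y)].
Proof.
move=> hG hT hTG; split.
- by split; [exact: RTf_Rapp | exact: RT_in_K].
- by split; [exact: OmegaT_alt | exact: OmegaT_contr2_mem].
- exact: RT_eq0_iff.
- exact: Tx_dot_identity.
Qed.
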